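(* Let $R$ be a real $d\times d$ matrix all of whose eigenvalues $\lambda$ satisfy $|\lambda|>1$, let $B\subset\mathbb{R}^d$ be finite with $\#B\ge2$, and let $\tau_b(x)=R^{-1}(x+b)$ for $b\in B$, so $\tau_b^{-1}(y)=Ry-b$. Then for every $x\in\mathbb{R}^d$ and $n\in\mathbb{N}$, the set $\{\tau_{\omega_n}^{-1}\cdots\tau_{\omega_1}^{-1}x:\omega_1,\dots,\omega_n\in B\}$ has at least $n$ elements, and the set $\{\tau_{\omega_n}\cdots\tau_{\omega_1}x:\omega_1,\dots,\omega_n\in B\}$ has at least $n$ elements. *)

From HB Require Import structures.
From mathcomp Require Import all_boot all_order all_algebra.
From mathcomp Require Import finmap.
From mathcomp Require Import complex.
From mathcomp Require Import reals.
Set Implicit Arguments. Unset Strict Implicit. Unset Printing Implicit Defensive.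
Import Order.TTheory GRing.Theory Num.Theory.
Local Open Scope ring_scope.

Definition cplx_eigenvalue (R : realType) (d : nat) (M : 'M[R]_d) (z : R[i]) : Prop :=
  root (map_poly (fun r : R => (r%:C)%C) (char_poly M)) z.

Definition tau (R : realType) (d : nat) (M : 'M[R]_d) (b x : 'cV[R]_d) : 'cV[R]_d :=
  invmx M *m (x + b).
Definition tau_inv (R : realType) (d : nat) (M : 'M[R]_d) (b y : 'cV[R]_d) : 'cV[R]_d :=
  M *m y - b.

(* tau_{w_n} o ... o tau_{w_1} x for w = [:: w_1; ...; w_n] (w_1 applied first) *)
Definition tau_word (R : realType) (d : nat) (M : 'M[R]_d) (w : seq 'cV[R]_d) (x : 'cV[R]_d) :=
  foldl (fun y b => tau M b y) x w.
Definition tau_inv_word (R : realType) (d : nat) (M : 'M[R]_d) (w : seq 'cV[R]_d) (x : 'cV[R]_d) :=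
  foldl (fun y b => tau_inv M b y) x w.

From HB Require Import structures.
From mathcomp Require Import all_boot all_order all_algebra.
From mathcomp Require Import finmap.
From mathcomp Require Import complex.
From mathcomp Require Import reals.
Set Implicit Arguments. Unset Strict Implicit. Unset Printing Implicit Defensive.
Import Order.TTheory GRing.Theory Num.Theory.
Local Open Scope ring_scope.
Local Open Scope fset_scope.

(* For b != c in B the maps differ by a nonzero translation: tau_inv_c =
   tau_inv_b + (b - c) and tau_c = tau_b + M^-1 (c - b), all of them injective
   since 0 is not an eigenvalue of M.  A nonempty finite set A in a vector space
   of characteristic 0 is never invariant under a translation by u != 0 (the
   sum of A would grow by #|A| u), so A' := tau_b(A) and tau_c(A) = A' + u have
   a union strictly larger than A'; by induction, words of length n reach more
   than n points. *)

Section Translates.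
Variables (R : numFieldType) (V : lmodType R).

Lemma translate_invariant_fset0 (A : {fset V}) (u : V) :
  u != 0 -> [fset (a + u)%R | a in A] = A -> A = fset0.
Proof.
move=> u_neq0 eqA; apply/eqP; rewrite -cardfs_eq0.
have /eqP : \sum_(a <- [fset (a + u)%R | a in A]) a = \sum_(a <- A) a by rewrite eqA.
rewrite big_imfset /=; last by move=> a b _ _; apply: addIr.
rewrite big_split /= big_const_seq count_predT iter_addr addr0 -subr_eq0 addrAC.
by rewrite subrr add0r -scaler_nat scaler_eq0 pnatr_eq0 (negbTE u_neq0) orbF.
Qed.

Lemma fproperU_translate (A : {fset V}) (u : V) :
  u != 0 -> A != fset0 -> A `<` A `|` [fset (a + u)%R | a in A].
Proof.
move=> u_neq0 A_neq0; apply: fproperUl; apply: contraNN A_neq0 => subA.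
have card_uA : #|` [fset (a + u)%R | a in A]| = #|` A|.
  by rewrite card_in_imfset //; move=> a b _ _; apply: addIr.
have eq_uA : [fset (a + u)%R | a in A] == A.
  by rewrite eqEfcard subA card_uA leqnn.
by rewrite (translate_invariant_fset0 u_neq0 (eqP eq_uA)).
Qed.

End Translates.

Section WordImages.
Variables (R : numFieldType) (V : lmodType R) (B : {fset V}) (F : V -> V -> V).

Definition word_images (x : V) (n : nat) : {fset V} :=
  [fset foldl (fun y b => F b y) x (map val (tval (w : n.-tuple B))) | w : n.-tuple B].

Lemma word_images0 (x : V) : x \in word_images x 0.
Proof. by apply/imfsetP; exists [tuple]. Qed.

Lemma word_imagesS (b x : V) (n : nat) :
  b \in B -> F b @` word_images x n `<=` word_images x n.+1.
Proof.
move=> bB; apply/fsubsetP => _ /imfsetP[_ /imfsetP[w _ ->] ->].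
apply/imfsetP; exists [tuple of rcons (tval w) [` bB]] => //=.
by rewrite map_rcons foldl_rcons.
Qed.

Lemma card_word_images_gt (b c u : V) :
  (forall a, injective (F a)) -> b \in B -> c \in B -> u != 0 ->
  F c =1 (fun y => F b y + u)%R -> forall x n, (n < #|` word_images x n|)%N.
Proof.
move=> F_inj bB cB u_neq0 Fcb x; elim=> [|n IHn].
  by rewrite cardfs_gt0; apply/fset0Pn; exists x; apply: word_images0.
set A := word_images x n.
have card_FbA : #|` F b @` A| = #|` A|.
  by rewrite card_in_imfset //; move=> y z _ _; apply: F_inj.
have FcA : F c @` A = [fset (a + u)%R | a in F b @` A].
  apply/fsetP => z; apply/imfsetP/imfsetP => [[y yA ->]|[_ /imfsetP[y yA ->] ->]].
    by exists (F b y); [apply: in_imfset | rewrite Fcb].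
  by exists y; rewrite ?Fcb.
have FbA_neq0 : F b @` A != fset0.
  by rewrite -cardfs_gt0 card_FbA (leq_ltn_trans _ IHn).
apply: (leq_ltn_trans IHn); rewrite -card_FbA.
apply: leq_trans (fproper_ltn_card (fproperU_translate u_neq0 FbA_neq0)) _.
by rewrite -FcA fsubset_leq_card // fsubUset !word_imagesS.
Qed.

End WordImages.

Section Tau.
Variables (R : realType) (d : nat) (M : 'M[R]_d).

Lemma unitmx_cplx_eigenvalue0 : ~ cplx_eigenvalue M 0 -> M \in unitmx.
Proof.
apply: contra_notT; rewrite unitmxE unitfE negbK => /eqP det0.
rewrite /cplx_eigenvalue /root horner_coef0 coef_map_id0 //.
by rewrite char_poly_det det0 mulr0.
Qed.

Hypothesis M_unit : M \in unitmx.

Lemma tau_inv_inj (b : 'cV[R]_d) : injective (tau_inv M b).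
Proof. by move=> y z /addIr eq_Myz; rewrite -(mulKmx M_unit y) eq_Myz mulKmx. Qed.

Lemma tau_inj (b : 'cV[R]_d) : injective (tau M b).
Proof.
move=> y z; rewrite /tau => eq_tau; apply: (addIr b).
by rewrite -(mulKVmx M_unit (y + b)%R) eq_tau mulKVmx.
Qed.

Lemma tau_invD (b c : 'cV[R]_d) :
  tau_inv M c =1 (fun y => tau_inv M b y + (b - c))%R.
Proof. by move=> y; rewrite /tau_inv addrA subrK. Qed.

Lemma tauD (b c : 'cV[R]_d) :
  tau M c =1 (fun y => tau M b y + invmx M *m (c - b))%R.
Proof. by move=> y; rewrite /tau -mulmxDr -addrA subrKC. Qed.

End Tau.

Theorem lemma6p5 (R : realType) (d : nat) (M : 'M[R]_d)
  (hM : forall z : R[i], cplx_eigenvalue M z -> 1 < `|z|)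
  (B : {fset 'cV[R]_d}) (hB : (2 <= #|` B|)%N)
  (x : 'cV[R]_d) (n : nat) :
  (n <= #|` [fset tau_inv_word M (map val (tval (w : n.-tuple B))) x | w : n.-tuple B] |)%N /\
  (n <= #|` [fset tau_word M (map val (tval (w : n.-tuple B))) x | w : n.-tuple B] |)%N.
Proof.
have M_unit : M \in unitmx.
  by apply: unitmx_cplx_eigenvalue0 => /hM; rewrite normr0 ltr10.
have [b bB] : exists b, b \in B.
  by apply/fset0Pn; rewrite -cardfs_gt0 (leq_trans _ hB).
have [c] : exists c, c \in B `\ b.
  by apply/fset0Pn; rewrite -cardfs_gt0; move: hB; rewrite (cardfsD1 b) bB.
rewrite in_fsetD1 => /andP[cb cB].
have bc_neq0 : b - c != 0 by rewrite subr_eq0 eq_sym.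
split; apply: ltnW.
- exact: (card_word_images_gt (tau_inv_inj M_unit) bB cB bc_neq0
            (@tau_invD _ _ M b c)).
- apply: (card_word_images_gt (tau_inj M_unit) bB cB _ (@tauD _ _ M b c)).
  apply: contraNneq cb => /(congr1 (mulmx M)).
  by rewrite mulKVmx // mulmx0 => /eqP; rewrite subr_eq0.
Qed.
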